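(* If $\mathscr{S}_1,\mathscr{S}_2\subset\mathbb{T}^n$ are projected tropical Metzler spectrahedra, then $\mathrm{tconv}(\mathscr{S}_1\cup\mathscr{S}_2)$ is a projected tropical Metzler spectrahedron.
   Context: $\mathbb{T}=\mathbb{R}\cup\{-\infty\}$. Tropically convex: $\max(\lambda+x,\mu+y)\in X$ for $x,y\in X$, $\lambda,\mu\in\mathbb{T}$ with $\max(\lambda,\mu)=0$; $\mathrm{tconv}(Z)$ is the smallest tropically convex set containing $Z$. Signed tropical numbers $\mathbb{S}=(\{\pm1\}\times\mathbb{R})\cup\{(0,-\infty)\}$, $(1,a)$ positive, $(-1,a)$ negative, modulus $|(s,a)|=a$; a matrix over $\mathbb{S}$ is tropical Metzler if off-diagonal entries are negative or $(0,-\infty)$. For symmetric tropical Metzler $Q^{(0)},\dots,Q^{(N)}$, with $x_0:=0$ and $x\in\mathbb{T}^N$: $Q^{+}_{ii}(x)=\max\{|Q^{(k)}_{ii}|+x_k: Q^{(k)}_{ii}\text{ positive}\}$, $Q^-_{ii}$ likewise with negative entries ($\max\emptyset=-\infty$), $Q_{ij}(x)=\max_k(|Q^{(k)}_{ij}|+x_k)$ ($i\ne j$); the tropical Metzler spectrahedron $\mathcal{S}(Q^{(0)}|Q^{(1)},\dots,Q^{(N)})=\{x\in\mathbb{T}^N: Q^+_{ii}(x)\ge Q^-_{ii}(x)\ \forall i,\ Q^+_{ii}(x)+Q^+_{jj}(x)\ge2Q_{ij}(x)\ \forall i\ne j\}$. A subset of $\mathbb{T}^d$ is a projected tropical Metzler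 spectrahedron if it is the image of a tropical Metzler spectrahedron in $\mathbb{T}^{d+d'}$ ($d'\ge0$) under projection onto the first $d$ coordinates. *)

From Stdlib Require Import Reals List.
Import ListNotations.
Open Scope R_scope.

(* Tropical numbers T = R ∪ {-oo}: None encodes -oo. *)
Definition trop := option R.

Definition tmax (a b : trop) : trop :=
  match a, b with
  | None, _ => b
  | _, None => a
  | Some x, Some y => Some (Rmax x y)
  end.

(* classical addition = tropical multiplication; -oo absorbing *)
Definition tplus (a b : trop) : trop :=
  match a, b with
  | Some x, Some y => Some (x + y)
  | _, _ => None
  end.

Definition tle (a b : trop) : Prop :=
  match a, b with
  | None, _ => True
  | Some _, None => False
  | Some x, Some y => x <= y
  end.

Definition tmax_list (l : list trop) : trop := fold_right tmax None l.

(* Points of T^d are lists of length d; subsets are predicates on lists. *)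
Definition tpoint := list trop.

Fixpoint zipWith (f : trop -> trop -> trop) (x y : list trop) : list trop :=
  match x, y with
  | a :: x', b :: y' => f a b :: zipWith f x' y'
  | _, _ => []
  end.

Definition tcomb (lam mu : trop) (x y : tpoint) : tpoint :=
  zipWith (fun a b => tmax (tplus lam a) (tplus mu b)) x y.

Definition tconvex (X : tpoint -> Prop) : Prop :=
  forall x y lam mu, X x -> X y -> tmax lam mu = Some 0 -> X (tcomb lam mu x y).

Definition tconv (d : nat) (Z : tpoint -> Prop) : tpoint -> Prop :=
  fun p => length p = d /\
    forall X : tpoint -> Prop, tconvex X -> (forall z, Z z -> X z) -> X p.

(* Signed tropical numbers: (1,a), (-1,a), (0,-oo). *)
Inductive strop : Type :=
  | SPos : R -> strop
  | SNeg : R -> strop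
  | SZero : strop.

Definition smod (s : strop) : trop :=
  match s with
  | SPos a => Some a
  | SNeg a => Some a
  | SZero => None
  end.

(* A family of m x m matrices Q^(0), ..., Q^(N): Q k i j is entry (i,j) of Q^(k),
   indices i, j < m, k <= N (0-based matrix indices). *)
Definition mfamily := nat -> nat -> nat -> strop.

Definition is_symmetric_fam (m N : nat) (Q : mfamily) : Prop :=
  forall k i j, (k <= N)%nat -> (i < m)%nat -> (j < m)%nat -> Q k i j = Q k j i.

Definition is_metzler_fam (m N : nat) (Q : mfamily) : Prop :=
  forall k i j, (k <= N)%nat -> (i < m)%nat -> (j < m)%nat -> i <> j ->
    (exists a, Q k i j = SNeg a) \/ Q k i j = SZero.

(* x_0 := 0, x_k = k-th coordinate (1-based) of x for 1 <= k <= N *)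
Definition xcoord (x : tpoint) (k : nat) : trop :=
  match k with
  | O => Some 0
  | S k' => nth k' x None
  end.

Definition Qplus (N : nat) (Q : mfamily) (x : tpoint) (i : nat) : trop :=
  tmax_list (map (fun k => match Q k i i with
                           | SPos a => tplus (Some a) (xcoord x k)
                           | _ => None end) (seq 0 (S N))).

Definition Qminus (N : nat) (Q : mfamily) (x : tpoint) (i : nat) : trop :=
  tmax_list (map (fun k => match Q k i i with
                           | SNeg a => tplus (Some a) (xcoord x k)
                           | _ => None end) (seq 0 (S N))).

Definition Qoff (N : nat) (Q : mfamily) (x : tpoint) (i j : nat) : trop :=
  tmax_list (map (fun k => tplus (smod (Q k i j)) (xcoord x k)) (seq 0 (S N))).

Definition tms (m N : nat) (Q : mfamily) : tpoint -> Prop :=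
  fun x => length x = N /\
    (forall i, (i < m)%nat -> tle (Qminus N Q x i) (Qplus N Q x i)) /\
    (forall i j, (i < m)%nat -> (j < m)%nat -> i <> j ->
       tle (tplus (Qoff N Q x i j) (Qoff N Q x i j))
           (tplus (Qplus N Q x i) (Qplus N Q x j))).

Definition proj_tms (d : nat) (P : tpoint -> Prop) : Prop :=
  exists (d' m : nat) (Q : mfamily),
    is_symmetric_fam m (d + d') Q /\ is_metzler_fam m (d + d') Q /\
    forall p, P p <-> exists y, tms m (d + d') Q y /\ firstn d y = p.

(* A point lies in tconv(S1 ∪ S2) iff it is max(λ + x, μ + y) with x ∈ S1,
   y ∈ S2 and max(λ, μ) = 0, where λ = -oo or μ = -oo lets one of the two
   points drop out.  The inequalities defining a Metzler spectrahedron are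
   homogeneous in (x_0, x), so the scaled pair (λ, λ + y1) is cut out by the
   system of S1 with the constant coordinate x_0 replaced by λ.  Putting the two
   homogenized systems, the linear constraints λ, μ <= 0 <= max(λ, μ) and
   u_k, v_k <= z_k <= max(u_k, v_k), and quadratic constraints 2 u_k <= λ + s_k
   (which force u_k = -oo when λ = -oo) into one block-diagonal Metzler family
   gives a spectrahedron whose projection to z is contained in the hull; the
   converse inclusion holds because projected Metzler spectrahedra are
   tropically convex. *)

From Stdlib Require Import Reals List Lia Lra Bool.
Import ListNotations.
Open Scope nat_scope.

Ltac trop_auto :=
  intros; repeat match goal with a : trop |- _ => destruct a end;
  simpl in *; unfold Rmax in *;
  repeat match goal with
         | H : Some _ = Some _ |- _ => injection H; clear H; intro H
         | |- context [Rle_dec ?a ?b] => destruct (Rle_dec a b)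
         | H : context [Rle_dec ?a ?b] |- _ => destruct (Rle_dec a b)
         end;
  try (f_equal; lra); try lra; try tauto; try discriminate; try congruence.

Lemma tle_refl a : tle a a. Proof. trop_auto. Qed.
Lemma tle_trans a b c : tle a b -> tle b c -> tle a c. Proof. trop_auto. Qed.
Lemma tle_antisym a b : tle a b -> tle b a -> a = b. Proof. trop_auto. Qed.
Lemma tle_None a : tle None a. Proof. trop_auto. Qed.
Lemma tle_None_r a : tle a None -> a = None. Proof. trop_auto. Qed.
Lemma tmax_le_l a b : tle a (tmax a b). Proof. trop_auto. Qed.
Lemma tmax_le_r a b : tle b (tmax a b). Proof. trop_auto. Qed.
Lemma tmax_lub a b c : tle a c -> tle b c -> tle (tmax a b) c. Proof. trop_auto. Qed.
Lemma tmax_comm a b : tmax a b = tmax b a. Proof. trop_auto. Qed.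
Lemma tmax_assoc a b c : tmax a (tmax b c) = tmax (tmax a b) c. Proof. trop_auto. Qed.
Lemma tmax_None_r a : tmax a None = a. Proof. trop_auto. Qed.
Lemma tmax_eq0_le_l a b : tmax a b = Some 0%R -> tle a (Some 0%R). Proof. trop_auto. Qed.
Lemma tmax_eq0_le_r a b : tmax a b = Some 0%R -> tle b (Some 0%R). Proof. trop_auto. Qed.
Lemma tplus_comm a b : tplus a b = tplus b a. Proof. trop_auto. Qed.
Lemma tplus_None_r a : tplus a None = None. Proof. trop_auto. Qed.
Lemma tplus_0_l a : tplus (Some 0%R) a = a. Proof. trop_auto. Qed.
Lemma tplus_0_r a : tplus a (Some 0%R) = a. Proof. trop_auto. Qed.
Lemma tplus_tmax_distr a b c : tplus a (tmax b c) = tmax (tplus a b) (tplus a c).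
Proof. trop_auto. Qed.
Lemma tplus_opp_r c a : tplus (Some c) (tplus (Some (- c)%R) a) = a. Proof. trop_auto. Qed.
Lemma tplus_square_eq l a : tplus (tplus l a) (tplus l a) = tplus l (tplus a (tplus l a)).
Proof. trop_auto. Qed.
Lemma tplus_diag_None a : tplus a a = None -> a = None. Proof. trop_auto. Qed.

Lemma tmax_le_tcomb l mu a1 b1 a2 b2 : tle a1 b1 -> tle a2 b2 ->
  tle (tmax (tplus l a1) (tplus mu a2)) (tmax (tplus l b1) (tplus mu b2)).
Proof. trop_auto. Qed.

Lemma tsquare_le_tcomb l mu o1 p1 q1 o2 p2 q2 :
  tle (tplus o1 o1) (tplus p1 q1) -> tle (tplus o2 o2) (tplus p2 q2) ->
  tle (tplus (tmax (tplus l o1) (tplus mu o2)) (tmax (tplus l o1) (tplus mu o2)))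
      (tplus (tmax (tplus l p1) (tplus mu p2)) (tmax (tplus l q1) (tplus mu q2))).
Proof. trop_auto. Qed.

Lemma tmax_list_ub l a : In a l -> tle a (tmax_list l).
Proof.
  induction l as [|b l IH]; simpl; [tauto|].
  intros [->|H]; [apply tmax_le_l|].
  eapply tle_trans; [apply IH, H|apply tmax_le_r].
Qed.

Lemma tmax_list_lub l c : (forall a, In a l -> tle a c) -> tle (tmax_list l) c.
Proof.
  induction l as [|b l IH]; simpl; intros H; [exact I|].
  apply tmax_lub; auto.
Qed.

Lemma tmax_list_ext l1 l2 :
  (forall a, In a l1 -> a = None \/ In a l2) ->
  (forall a, In a l2 -> a = None \/ In a l1) ->
  tmax_list l1 = tmax_list l2.
Proof.
  intros H1 H2; apply tle_antisym; apply tmax_list_lub; intros a Ha.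
  - destruct (H1 a Ha) as [->|H]; [apply tle_None|now apply tmax_list_ub].
  - destruct (H2 a Ha) as [->|H]; [apply tle_None|now apply tmax_list_ub].
Qed.

Lemma tmax_list_map_tmax {A} (f g : A -> trop) l :
  tmax_list (map (fun k => tmax (f k) (g k)) l) =
  tmax (tmax_list (map f l)) (tmax_list (map g l)).
Proof.
  induction l as [|a l IH]; simpl; [reflexivity|]. rewrite IH, !tmax_assoc.
  f_equal. rewrite <- !tmax_assoc. f_equal. apply tmax_comm.
Qed.

Lemma tmax_list_map_tplus {A} c (f : A -> trop) l :
  tmax_list (map (fun k => tplus c (f k)) l) = tplus c (tmax_list (map f l)).
Proof.
  induction l as [|a l IH]; simpl; [now rewrite tplus_None_r|].
  now rewrite IH, tplus_tmax_distr.
Qed.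

Lemma tmax_list_map_None {A} (f : A -> trop) l :
  (forall k, In k l -> f k = None) -> tmax_list (map f l) = None.
Proof.
  induction l as [|a l IH]; simpl; intros H; [reflexivity|].
  rewrite H, IH by auto. reflexivity.
Qed.

(* Valuations [e : nat -> trop] of the coordinates [0..N], where coordinate 0
   is homogenizing: [tms] is [tms_at] at [xcoord x], which puts 0 there. *)
Definition tlin (N : nat) (h : nat -> trop -> trop) (e : nat -> trop) : trop :=
  tmax_list (map (fun k => h k (e k)) (seq 0 (S N))).

Definition pos_term (q : strop) (t : trop) : trop :=
  match q with SPos a => tplus (Some a) t | _ => None end.
Definition neg_term (q : strop) (t : trop) : trop :=
  match q with SNeg a => tplus (Some a) t | _ => None end.
Definition mod_term (q : strop) (t : trop) : trop := tplus (smod q) t.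

Definition Qplus_at N (Q : mfamily) e i := tlin N (fun k => pos_term (Q k i i)) e.
Definition Qminus_at N (Q : mfamily) e i := tlin N (fun k => neg_term (Q k i i)) e.
Definition Qoff_at N (Q : mfamily) e i j := tlin N (fun k => mod_term (Q k i j)) e.

Definition diag_ok N Q e i : Prop := tle (Qminus_at N Q e i) (Qplus_at N Q e i).
Definition pair_ok N Q e i j : Prop :=
  tle (tplus (Qoff_at N Q e i j) (Qoff_at N Q e i j))
      (tplus (Qplus_at N Q e i) (Qplus_at N Q e j)).

Definition tms_at (m N : nat) (Q : mfamily) (e : nat -> trop) : Prop :=
  (forall i, i < m -> diag_ok N Q e i) /\
  (forall i j, i < m -> j < m -> i <> j -> pair_ok N Q e i j).

Lemma tms_tms_at m N Q x : tms m N Q x <-> length x = N /\ tms_at m N Q (xcoord x).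
Proof. reflexivity. Qed.

Definition tlinear (h : trop -> trop) : Prop :=
  (forall l a, h (tplus l a) = tplus l (h a)) /\
  (forall a b, h (tmax a b) = tmax (h a) (h b)).

Lemma pos_term_tlinear q : tlinear (pos_term q).
Proof. split; destruct q; simpl; trop_auto. Qed.
Lemma neg_term_tlinear q : tlinear (neg_term q).
Proof. split; destruct q; simpl; trop_auto. Qed.
Lemma mod_term_tlinear q : tlinear (mod_term q).
Proof. unfold mod_term; split; destruct q; simpl; trop_auto. Qed.

Lemma tlinear_None h : tlinear h -> h None = None.
Proof. intros [H _]. exact (H None None). Qed.

Lemma tlin_ext N h e1 e2 : (forall k, k <= N -> e1 k = e2 k) -> tlin N h e1 = tlin N h e2.
Proof.
  intros H; unfold tlin; f_equal; apply map_ext_in; intros k Hk.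
  apply in_seq in Hk. rewrite H by lia. reflexivity.
Qed.

Lemma tlin_coef_ext N h1 h2 e : (forall k t, h1 k t = h2 k t) -> tlin N h1 e = tlin N h2 e.
Proof. intros H; unfold tlin; f_equal; apply map_ext; auto. Qed.

Lemma tlin_tcomb N h l mu e1 e2 : (forall k, tlinear (h k)) ->
  tlin N h (fun k => tmax (tplus l (e1 k)) (tplus mu (e2 k))) =
  tmax (tplus l (tlin N h e1)) (tplus mu (tlin N h e2)).
Proof.
  intros Hl; unfold tlin.
  rewrite <- !tmax_list_map_tplus, <- tmax_list_map_tmax. f_equal.
  apply map_ext; intro k. destruct (Hl k) as [H1 H2]. now rewrite H2, !H1.
Qed.

Lemma tlin_None N h : (forall k, tlinear (h k)) -> tlin N h (fun _ => None) = None.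
Proof. intros Hl; apply tmax_list_map_None; intros k _; now apply tlinear_None. Qed.

Lemma tlin_single N h e a : a <= N ->
  (forall k, k <> a -> h k (e k) = None) -> h a (e a) = e a -> tlin N h e = e a.
Proof.
  intros Ha H1 H2. transitivity (tmax_list [e a]); [|apply tmax_None_r].
  apply tmax_list_ext.
  - intros x Hx. apply in_map_iff in Hx as [k [<- _]].
    destruct (Nat.eq_dec k a) as [->|Hne]; [right; rewrite H2; now left|left; auto].
  - intros x [<-|[]]. right. apply in_map_iff. exists a. split; auto. apply in_seq; lia.
Qed.

Lemma tms_at_congr m N N' Q Q' e e' :
  (forall i, Qplus_at N Q e i = Qplus_at N' Q' e' i) ->
  (forall i, Qminus_at N Q e i = Qminus_at N' Q' e' i) ->
  (forall i j, Qoff_at N Q e i j = Qoff_at N' Q' e' i j) ->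
  tms_at m N Q e <-> tms_at m N' Q' e'.
Proof.
  intros HP HM HO. unfold tms_at, diag_ok, pair_ok.
  setoid_rewrite HP; setoid_rewrite HM; setoid_rewrite HO. reflexivity.
Qed.

Lemma tms_at_ext m N Q e1 e2 : (forall k, k <= N -> e1 k = e2 k) ->
  tms_at m N Q e1 -> tms_at m N Q e2.
Proof.
  intros H. apply (tms_at_congr m N N Q Q e1 e2); intros; apply tlin_ext, H.
Qed.

Lemma tms_at_tcomb m N Q l mu e1 e2 : tms_at m N Q e1 -> tms_at m N Q e2 ->
  tms_at m N Q (fun k => tmax (tplus l (e1 k)) (tplus mu (e2 k))).
Proof.
  intros [D1 P1] [D2 P2]; unfold tms_at, diag_ok, pair_ok, Qplus_at, Qminus_at, Qoff_at in *.
  split; intros.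
  - rewrite !tlin_tcomb by (intros; apply pos_term_tlinear || apply neg_term_tlinear).
    apply tmax_le_tcomb; auto.
  - rewrite !tlin_tcomb by (intros; apply pos_term_tlinear || apply mod_term_tlinear).
    apply tsquare_le_tcomb; auto.
Qed.

Lemma tms_at_scale m N Q l e : tms_at m N Q e -> tms_at m N Q (fun k => tplus l (e k)).
Proof.
  intros H. eapply tms_at_ext; [|exact (tms_at_tcomb m N Q l None e e H H)].
  intros k _. apply tmax_None_r.
Qed.

Lemma tms_at_None m N Q : tms_at m N Q (fun _ => None).
Proof.
  unfold tms_at, diag_ok, pair_ok, Qplus_at, Qminus_at, Qoff_at.
  split; intros; rewrite tlin_None by (intros; apply neg_term_tlinear || apply mod_term_tlinear);
    exact I.
Qed.

Lemma length_zipWith f x y : length (zipWith f x y) = Nat.min (length x) (length y).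
Proof. revert y; induction x as [|a x IH]; intros [|b y]; simpl; auto. Qed.

Lemma nth_zipWith f x y k : k < length x -> k < length y ->
  nth k (zipWith f x y) None = f (nth k x None) (nth k y None).
Proof.
  revert y k; induction x as [|a x IH]; intros [|b y] k H1 H2; simpl in *; try lia.
  destruct k; auto. apply IH; lia.
Qed.

Lemma firstn_zipWith f n x y : firstn n (zipWith f x y) = zipWith f (firstn n x) (firstn n y).
Proof.
  revert x y; induction n as [|n IH]; intros [|a x] [|b y]; simpl; auto.
  now rewrite IH.
Qed.

Lemma zipWith_map f (g h : nat -> trop) l :
  zipWith f (map g l) (map h l) = map (fun k => f (g k) (h k)) l.
Proof. induction l; simpl; congruence. Qed.

Lemma xcoord_map_seq (e : nat -> trop) N k : 1 <= k <= N -> xcoord (map e (seq 1 N)) k = e k.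
Proof.
  intros H. destruct k as [|k]; [lia|]. simpl.
  rewrite nth_indep with (d' := e 0) by (rewrite length_map, length_seq; lia).
  rewrite map_nth, seq_nth by lia. reflexivity.
Qed.

Lemma firstn_xcoord y n : n <= length y -> firstn n y = map (xcoord y) (seq 1 n).
Proof.
  revert y; induction n as [|n IH]; intros y H; [reflexivity|].
  destruct y as [|a y]; simpl in *; [lia|]. f_equal.
  rewrite IH by lia. rewrite <- (seq_shift n 1), map_map. apply map_ext_in.
  intros k Hk; apply in_seq in Hk. destruct k; [lia|reflexivity].
Qed.

Lemma firstn_map_seq (f : nat -> trop) a n N : n <= N ->
  firstn n (map f (seq a N)) = map f (seq a n).
Proof.
  revert a N; induction n as [|n IH]; intros a N H; [reflexivity|].
  destruct N as [|N]; [lia|]. simpl. f_equal. apply IH; lia.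
Qed.

Lemma tcomb_map_seq l mu (a b : nat -> trop) n :
  tcomb l mu (map a (seq 1 n)) (map b (seq 1 n)) =
  map (fun k => tmax (tplus l (a k)) (tplus mu (b k))) (seq 1 n).
Proof. exact (zipWith_map _ a b _). Qed.

Lemma tms_map_seq m N Q e : e 0 = Some 0%R -> tms_at m N Q e -> tms m N Q (map e (seq 1 N)).
Proof.
  intros H0 He. apply tms_tms_at; split; [now rewrite length_map, length_seq|].
  eapply tms_at_ext; [|exact He]. intros [|k] Hk; [easy|].
  symmetry; apply xcoord_map_seq; lia.
Qed.

Lemma tms_tcomb m N Q x y l mu : tmax l mu = Some 0%R ->
  tms m N Q x -> tms m N Q y -> tms m N Q (tcomb l mu x y).
Proof.
  intros H0 [Lx Ex]%tms_tms_at [Ly Ey]%tms_tms_at. apply tms_tms_at; split.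
  - unfold tcomb; rewrite length_zipWith; lia.
  - eapply tms_at_ext; [|exact (tms_at_tcomb m N Q l mu _ _ Ex Ey)].
    intros [|k] Hk; simpl.
    + now rewrite !tplus_0_r.
    + unfold tcomb. rewrite nth_zipWith by lia. reflexivity.
Qed.

Definition tms_projection (d m N : nat) (Q : mfamily) : tpoint -> Prop :=
  fun p => exists y, tms m N Q y /\ firstn d y = p.

Lemma tms_projection_tconvex d m N Q : tconvex (tms_projection d m N Q).
Proof.
  intros x y l mu [y1 [T1 <-]] [y2 [T2 <-]] H0. exists (tcomb l mu y1 y2). split.
  - now apply tms_tcomb.
  - apply firstn_zipWith.
Qed.

Lemma tms_projection_of_tms_at d m N Q e c : d <= N ->
  e 0 = Some c -> tms_at m N Q e ->
  tms_projection d m N Q (map (fun k => tplus (Some (- c)%R) (e k)) (seq 1 d)).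
Proof.
  intros Hd Hc He.
  exists (map (fun k => tplus (Some (- c)%R) (e k)) (seq 1 N)); split.
  - apply tms_map_seq; [|now apply tms_at_scale].
    rewrite Hc; simpl; f_equal; lra.
  - now apply firstn_map_seq.
Qed.

Definition sym_metzler (m : nat) (Q : mfamily) : Prop :=
  (forall k i j, i < m -> j < m -> Q k i j = Q k j i) /\
  (forall k i j, i < m -> j < m -> i <> j ->
     (exists a, Q k i j = SNeg a) \/ Q k i j = SZero).

Lemma diag_ok_entry N Q Q' e i i' : (forall k, Q k i i = Q' k i' i') ->
  diag_ok N Q e i <-> diag_ok N Q' e i'.
Proof.
  intros H. unfold diag_ok, Qplus_at, Qminus_at.
  rewrite (tlin_coef_ext N (fun k => pos_term (Q k i i)) (fun k => pos_term (Q' k i' i'))),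
    (tlin_coef_ext N (fun k => neg_term (Q k i i)) (fun k => neg_term (Q' k i' i')))
    by (intros; now rewrite H).
  reflexivity.
Qed.

Lemma pair_ok_entry N Q Q' e i j i' j' :
  (forall k, Q k i i = Q' k i' i') -> (forall k, Q k j j = Q' k j' j') ->
  (forall k, Q k i j = Q' k i' j') ->
  pair_ok N Q e i j <-> pair_ok N Q' e i' j'.
Proof.
  intros Hi Hj Hij. unfold pair_ok, Qplus_at, Qoff_at.
  rewrite (tlin_coef_ext N (fun k => pos_term (Q k i i)) (fun k => pos_term (Q' k i' i'))),
    (tlin_coef_ext N (fun k => pos_term (Q k j j)) (fun k => pos_term (Q' k j' j'))),
    (tlin_coef_ext N (fun k => mod_term (Q k i j)) (fun k => mod_term (Q' k i' j')))
    by (intros; now rewrite ?Hi, ?Hj, ?Hij).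
  reflexivity.
Qed.

Lemma pair_ok_zero N Q e i j : (forall k, Q k i j = SZero) -> pair_ok N Q e i j.
Proof.
  intros H. unfold pair_ok, Qoff_at, tlin.
  rewrite tmax_list_map_None by (intros k _; now rewrite H). exact I.
Qed.

Definition blockdiag2 (ma : nat) (A B : mfamily) : mfamily :=
  fun k i j => if i <? ma then (if j <? ma then A k i j else SZero)
               else (if j <? ma then SZero else B k (i - ma) (j - ma)).

Lemma blockdiag2_ul ma A B k i j : i < ma -> j < ma -> blockdiag2 ma A B k i j = A k i j.
Proof. intros; unfold blockdiag2. rewrite !(proj2 (Nat.ltb_lt _ _)) by lia. reflexivity. Qed.

Lemma blockdiag2_dr ma A B k i j : blockdiag2 ma A B k (ma + i) (ma + j) = B k i j.
Proof. unfold blockdiag2. rewrite !(proj2 (Nat.ltb_ge _ _)) by lia. f_equal; lia. Qed.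

Lemma blockdiag2_off ma A B k i j : (i < ma <= j \/ j < ma <= i) ->
  blockdiag2 ma A B k i j = SZero.
Proof.
  intros H; unfold blockdiag2.
  destruct (Nat.ltb_spec i ma), (Nat.ltb_spec j ma); reflexivity || lia.
Qed.

Lemma tms_at_blockdiag2 ma mb N A B e :
  tms_at (ma + mb) N (blockdiag2 ma A B) e <-> tms_at ma N A e /\ tms_at mb N B e.
Proof.
  split.
  - intros [D P]. split; split.
    + intros i Hi. rewrite <- (diag_ok_entry N (blockdiag2 ma A B)) by
        (intros; apply blockdiag2_ul; lia). apply D; lia.
    + intros i j Hi Hj Hij. rewrite <- (pair_ok_entry N (blockdiag2 ma A B)) by
        (intros; apply blockdiag2_ul; lia). apply P; lia.
    + intros i Hi. rewrite <- (diag_ok_entry N (blockdiag2 ma A B) _ _ (ma + i)) by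
        (intros; apply blockdiag2_dr). apply D; lia.
    + intros i j Hi Hj Hij.
      rewrite <- (pair_ok_entry N (blockdiag2 ma A B) _ _ (ma + i) (ma + j)) by
        (intros; apply blockdiag2_dr). apply P; lia.
  - intros [[DA PA] [DB PB]]. split.
    + intros i Hi. destruct (Nat.lt_ge_cases i ma).
      * rewrite (diag_ok_entry N _ A _ i i) by (intros; apply blockdiag2_ul; lia). auto.
      * replace i with (ma + (i - ma)) by lia.
        rewrite (diag_ok_entry N _ B _ _ (i - ma)) by (intros; apply blockdiag2_dr).
        apply DB; lia.
    + intros i j Hi Hj Hij.
      destruct (Nat.lt_ge_cases i ma), (Nat.lt_ge_cases j ma).
      * rewrite (pair_ok_entry N _ A _ i j i j) by (intros; apply blockdiag2_ul; lia). auto.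
      * apply pair_ok_zero; intros; apply blockdiag2_off; lia.
      * apply pair_ok_zero; intros; apply blockdiag2_off; lia.
      * replace i with (ma + (i - ma)) by lia. replace j with (ma + (j - ma)) by lia.
        rewrite (pair_ok_entry N _ B _ _ _ (i - ma) (j - ma)) by (intros; apply blockdiag2_dr).
        apply PB; lia.
Qed.

Lemma sym_metzler_blockdiag2 ma mb A B :
  sym_metzler ma A -> sym_metzler mb B -> sym_metzler (ma + mb) (blockdiag2 ma A B).
Proof.
  intros [SA MA] [SB MB]; split; intros k i j Hi Hj; unfold blockdiag2;
    destruct (Nat.ltb_spec i ma), (Nat.ltb_spec j ma); auto.
  - apply SB; lia.
  - intros; apply MB; lia.
Qed.

Fixpoint blockdiag (l : list (nat * mfamily)) : nat * mfamily :=
  match l with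
  | [] => (0, fun _ _ _ => SZero)
  | (m, A) :: r => (m + fst (blockdiag r), blockdiag2 m A (snd (blockdiag r)))
  end.

Lemma tms_at_blockdiag N e l :
  tms_at (fst (blockdiag l)) N (snd (blockdiag l)) e <->
  Forall (fun b => tms_at (fst b) N (snd b) e) l.
Proof.
  induction l as [|[m A] l IH]; simpl.
  - split; [constructor|]. split; intros; lia.
  - rewrite tms_at_blockdiag2, IH, Forall_cons_iff. reflexivity.
Qed.

Lemma sym_metzler_blockdiag l : Forall (fun b => sym_metzler (fst b) (snd b)) l ->
  sym_metzler (fst (blockdiag l)) (snd (blockdiag l)).
Proof.
  induction l as [|[m A] l IH]; simpl; intros H.
  - split; intros; lia.
  - apply Forall_cons_iff in H as [H1 H2]. apply sym_metzler_blockdiag2; auto.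
Qed.

(* [shift off NA A] lets [A] act on the coordinates [off..off+NA]: its
   coordinate 0 becomes [off]. *)
Definition shift (off NA : nat) (A : mfamily) : mfamily :=
  fun k i j => if (off <=? k) && (k <=? off + NA) then A (k - off) i j else SZero.

Lemma tlin_shift N off NA (A : mfamily) i j (g : strop -> trop -> trop) e :
  off + NA <= N -> (forall t, g SZero t = None) ->
  tlin N (fun k => g (shift off NA A k i j)) e =
  tlin NA (fun k => g (A k i j)) (fun k => e (off + k)).
Proof.
  intros HN Hg. apply tmax_list_ext.
  - intros a Ha. apply in_map_iff in Ha as [k [<- Hk]]. apply in_seq in Hk.
    unfold shift. destruct (Nat.leb_spec off k), (Nat.leb_spec k (off + NA)); cbn [andb];
      try (left; apply Hg).
    right. apply in_map_iff. exists (k - off). split.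
    + do 2 f_equal. lia.
    + apply in_seq; lia.
  - intros a Ha. apply in_map_iff in Ha as [k [<- Hk]]. apply in_seq in Hk.
    right. apply in_map_iff. exists (off + k). split.
    + unfold shift. rewrite (proj2 (Nat.leb_le off (off + k))),
        (proj2 (Nat.leb_le (off + k) (off + NA))) by lia. cbn [andb].
      do 2 f_equal. lia.
    + apply in_seq; lia.
Qed.

Lemma tms_at_shift m N off NA A e : off + NA <= N ->
  tms_at m N (shift off NA A) e <-> tms_at m NA A (fun k => e (off + k)).
Proof.
  intros HN. apply tms_at_congr; intros; apply tlin_shift; auto.
Qed.

Lemma sym_metzler_shift m NA off A : is_symmetric_fam m NA A -> is_metzler_fam m NA A ->
  sym_metzler m (shift off NA A).
Proof.
  intros HS HM; split; intros k i j Hi Hj; unfold shift;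
    destruct (Nat.leb_spec off k), (Nat.leb_spec k (off + NA)); cbn [andb]; auto.
  - apply HS; lia.
  - intros; apply HM; lia.
Qed.

Definition le_max_block (pos : list nat) (q : nat) : mfamily :=
  fun k _ _ => if k =? q then SNeg 0%R
               else if existsb (Nat.eqb k) pos then SPos 0%R else SZero.

Lemma tms_at_le_max_block N pos q e : q <= N -> (forall p, In p pos -> p <= N /\ p <> q) ->
  tms_at 1 N (le_max_block pos q) e <-> tle (e q) (tmax_list (map e pos)).
Proof.
  intros Hq Hp.
  assert (HM : Qminus_at N (le_max_block pos q) e 0 = e q).
  { apply tlin_single; auto.
    - intros k Hk. unfold le_max_block. rewrite (proj2 (Nat.eqb_neq k q)) by auto.
      destruct (existsb _ _); reflexivity.
    - unfold le_max_block. rewrite Nat.eqb_refl. apply tplus_0_l. }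
  assert (HP : Qplus_at N (le_max_block pos q) e 0 = tmax_list (map e pos)).
  { apply tmax_list_ext.
    - intros x Hx. apply in_map_iff in Hx as [k [<- _]]. unfold le_max_block.
      destruct (k =? q); [now left|].
      destruct (existsb (Nat.eqb k) pos) eqn:E; [|now left].
      right. apply existsb_exists in E as [p [Hin Hkp]]. apply Nat.eqb_eq in Hkp as ->.
      cbn [pos_term]. rewrite tplus_0_l. now apply in_map.
    - intros x Hx. apply in_map_iff in Hx as [p [<- Hin]]. right.
      destruct (Hp p Hin) as [HpN Hpq].
      apply in_map_iff. exists p. split.
      + unfold le_max_block. rewrite (proj2 (Nat.eqb_neq p q)) by auto.
        replace (existsb (Nat.eqb p) pos) with true
          by (symmetry; apply existsb_exists; eauto using Nat.eqb_refl).
        apply tplus_0_l.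
      + apply in_seq; lia. }
  unfold tms_at, diag_ok. rewrite <- HM, <- HP. split.
  - intros [H _]. apply H; lia.
  - intros H. split; [intros i Hi; now replace i with 0 by lia|intros; lia].
Qed.

Lemma sym_metzler_le_max_block pos q : sym_metzler 1 (le_max_block pos q).
Proof. split; intros; [reflexivity|lia]. Qed.

Definition quad_block (a b c : nat) : mfamily := fun k i j =>
  match i, j with
  | 0, 0 => if k =? a then SPos 0%R else SZero
  | 1, 1 => if k =? b then SPos 0%R else SZero
  | 0, 1 | 1, 0 => if k =? c then SNeg 0%R else SZero
  | _, _ => SZero
  end.

Lemma sym_metzler_quad_block a b c : sym_metzler 2 (quad_block a b c).
Proof.
  split; intros k i j Hi Hj; destruct i as [|[|i]]; destruct j as [|[|j]]; try lia;
    simpl; auto; intros _; destruct (k =? c); eauto.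
Qed.

Lemma tms_at_quad_block N a b c e : a <= N -> b <= N -> c <= N ->
  tms_at 2 N (quad_block a b c) e <-> tle (tplus (e c) (e c)) (tplus (e a) (e b)).
Proof.
  intros Ha Hb Hc.
  assert (Hsingle : forall h p, p <= N ->
            (forall k, h k = if k =? p then SPos 0%R else SZero) \/
            (forall k, h k = if k =? p then SNeg 0%R else SZero) ->
            tlin N (fun k => mod_term (h k)) e = e p).
  { intros h p Hp Hh. apply tlin_single; auto.
    - intros k Hk. destruct Hh as [Hh|Hh]; rewrite Hh, (proj2 (Nat.eqb_neq k p)); auto.
    - destruct Hh as [Hh|Hh]; rewrite Hh, Nat.eqb_refl; apply tplus_0_l. }
  assert (P0 : Qplus_at N (quad_block a b c) e 0 = e a).
  { rewrite <- (Hsingle (fun k => quad_block a b c k 0 0) a); auto.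
    apply tlin_coef_ext; intros k t; simpl; now destruct (k =? a). }
  assert (P1 : Qplus_at N (quad_block a b c) e 1 = e b).
  { rewrite <- (Hsingle (fun k => quad_block a b c k 1 1) b); auto.
    apply tlin_coef_ext; intros k t; simpl; now destruct (k =? b). }
  assert (O : forall i j, (i, j) = (0, 1) \/ (i, j) = (1, 0) ->
            Qoff_at N (quad_block a b c) e i j = e c).
  { intros i j Hij. apply Hsingle; auto. right; intros k.
    destruct Hij as [Hij|Hij]; injection Hij as -> ->; reflexivity. }
  assert (M : forall i, Qminus_at N (quad_block a b c) e i = None).
  { intros i. apply tmax_list_map_None. intros k _.
    destruct i as [|[|i]]; simpl; try destruct (k =? a); try destruct (k =? b); reflexivity. }
  unfold tms_at, diag_ok, pair_ok. split.
  - intros [_ H]. specialize (H 0 1 ltac:(lia) ltac:(lia) ltac:(lia)).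
    now rewrite O, P0, P1 in H by auto.
  - intros H. split; [intros i _; rewrite M; exact I|].
    intros i j Hi Hj Hij. destruct i as [|[|i]]; destruct j as [|[|j]]; try lia.
    + now rewrite O, P0, P1 by auto.
    + rewrite O, P0, P1 by auto. now rewrite (tplus_comm (e b)).
Qed.

Section TconvHull.
Variables (n N1 N2 m1 m2 : nat) (Q1 Q2 : mfamily).
Hypotheses (Hn1 : n <= N1) (Hn2 : n <= N2).

(* Coordinates of the lifted valuation: [0] is homogenizing and [1..n] carry
   the point [z]; [off1] carries the weight [λ], followed by [N1] coordinates
   of [λ ⊙ y1]; likewise [off2] carries [μ], followed by [μ ⊙ y2]; [offs1 + k]
   and [offs2 + k] are slack coordinates. *)
Definition off1 := S n.
Definition off2 := n + N1 + 2.
Definition offs1 := n + N1 + N2 + 2.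
Definition offs2 := offs1 + n.
Definition Nhull := offs2 + n.

Ltac idx_lia := unfold Nhull, offs2, offs1, off2, off1 in *; lia.

(* The quadratic blocks force [u_k = -oo] whenever [λ = -oo], which the
   homogeneous constraints on [(λ, u)] alone would not. *)
Definition coord_blocks (k : nat) : list (nat * mfamily) :=
  [(1, le_max_block [k] (off1 + k)); (1, le_max_block [k] (off2 + k));
   (1, le_max_block [off1 + k; off2 + k] k);
   (2, quad_block off1 (offs1 + k) (off1 + k)); (2, quad_block off2 (offs2 + k) (off2 + k))].

Definition hull_blocks : list (nat * mfamily) :=
  (m1, shift off1 N1 Q1) :: (m2, shift off2 N2 Q2) ::
  (1, le_max_block [0] off1) :: (1, le_max_block [0] off2) ::
  (1, le_max_block [off1; off2] 0) :: flat_map coord_blocks (seq 1 n).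

Definition coord_cond (e : nat -> trop) (k : nat) : Prop :=
  tle (e (off1 + k)) (e k) /\ tle (e (off2 + k)) (e k) /\
  tle (e k) (tmax (e (off1 + k)) (e (off2 + k))) /\
  tle (tplus (e (off1 + k)) (e (off1 + k))) (tplus (e off1) (e (offs1 + k))) /\
  tle (tplus (e (off2 + k)) (e (off2 + k))) (tplus (e off2) (e (offs2 + k))).

Definition hull_cond (e : nat -> trop) : Prop :=
  tms_at m1 N1 Q1 (fun k => e (off1 + k)) /\ tms_at m2 N2 Q2 (fun k => e (off2 + k)) /\
  tle (e off1) (e 0) /\ tle (e off2) (e 0) /\ tle (e 0) (tmax (e off1) (e off2)) /\
  forall k, 1 <= k <= n -> coord_cond e k.

Lemma tms_at_le_max_block1 e p q : p <= Nhull -> q <= Nhull -> p <> q ->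
  tms_at 1 Nhull (le_max_block [p] q) e <-> tle (e q) (e p).
Proof.
  intros Hp Hq Hpq. rewrite tms_at_le_max_block by (auto; intros ? [<-|[]]; auto).
  simpl. now rewrite tmax_None_r.
Qed.

Lemma tms_at_le_max_block2 e p p' q : p <= Nhull -> p' <= Nhull -> q <= Nhull ->
  p <> q -> p' <> q ->
  tms_at 1 Nhull (le_max_block [p; p'] q) e <-> tle (e q) (tmax (e p) (e p')).
Proof.
  intros Hp Hp' Hq Hpq Hpq'.
  rewrite tms_at_le_max_block by (auto; intros ? [<-|[<-|[]]]; auto).
  simpl. now rewrite tmax_None_r.
Qed.

Lemma tms_at_coord_blocks e k : 1 <= k <= n ->
  Forall (fun b => tms_at (fst b) Nhull (snd b) e) (coord_blocks k) <-> coord_cond e k.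
Proof.
  intros Hk. unfold coord_blocks, coord_cond. rewrite !Forall_cons_iff. cbn [fst snd].
  rewrite !tms_at_le_max_block1, tms_at_le_max_block2, !tms_at_quad_block by idx_lia.
  split; [tauto|intuition constructor].
Qed.

Lemma tms_at_hull_blocks e :
  tms_at (fst (blockdiag hull_blocks)) Nhull (snd (blockdiag hull_blocks)) e <-> hull_cond e.
Proof.
  rewrite tms_at_blockdiag. unfold hull_blocks, hull_cond.
  rewrite !Forall_cons_iff, Forall_flat_map, Forall_forall. cbn [fst snd].
  rewrite !tms_at_shift, !tms_at_le_max_block1, tms_at_le_max_block2 by idx_lia.
  assert (HC : (forall k, In k (seq 1 n) ->
                 Forall (fun b => tms_at (fst b) Nhull (snd b) e) (coord_blocks k)) <->
               (forall k, 1 <= k <= n -> coord_cond e k)).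
  { split; intros H k Hk.
    - apply tms_at_coord_blocks, H; [lia|apply in_seq; lia].
    - apply in_seq in Hk. apply tms_at_coord_blocks, H; lia. }
  rewrite HC. tauto.
Qed.

Lemma sym_metzler_hull_blocks :
  is_symmetric_fam m1 N1 Q1 -> is_metzler_fam m1 N1 Q1 ->
  is_symmetric_fam m2 N2 Q2 -> is_metzler_fam m2 N2 Q2 ->
  sym_metzler (fst (blockdiag hull_blocks)) (snd (blockdiag hull_blocks)).
Proof.
  intros S1 M1 S2 M2. apply sym_metzler_blockdiag. unfold hull_blocks.
  repeat apply Forall_cons; try apply sym_metzler_shift; try apply sym_metzler_le_max_block;
    auto.
  apply Forall_flat_map, Forall_forall. intros k _.
  repeat apply Forall_cons; cbn [fst snd];
    auto using Forall_nil, sym_metzler_le_max_block, sym_metzler_quad_block.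
Qed.

(* The slack [s_k = y1_k + u_k] makes [λ + s_k = 2 u_k]. *)
Definition hull_witness (l mu : trop) (e1 e2 : nat -> trop) (k : nat) : trop :=
  if k <=? n then tmax (tplus l (e1 k)) (tplus mu (e2 k))
  else if k <=? off1 + N1 then tplus l (e1 (k - off1))
  else if k <=? off2 + N2 then tplus mu (e2 (k - off2))
  else if k <=? offs1 + n then tplus (e1 (k - offs1)) (tplus l (e1 (k - offs1)))
  else tplus (e2 (k - offs2)) (tplus mu (e2 (k - offs2))).

Ltac witness_auto := intros; unfold hull_witness;
  repeat match goal with |- context [?a <=? ?b] => destruct (Nat.leb_spec a b) end;
  try idx_lia; repeat f_equal; idx_lia.

Section Witness.
Variables (l mu : trop) (e1 e2 : nat -> trop).

Lemma hull_witness_z k : k <= n ->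
  hull_witness l mu e1 e2 k = tmax (tplus l (e1 k)) (tplus mu (e2 k)).
Proof. witness_auto. Qed.
Lemma hull_witness_u k : k <= N1 -> hull_witness l mu e1 e2 (off1 + k) = tplus l (e1 k).
Proof. witness_auto. Qed.
Lemma hull_witness_v k : k <= N2 -> hull_witness l mu e1 e2 (off2 + k) = tplus mu (e2 k).
Proof. witness_auto. Qed.
Lemma hull_witness_s1 k : 1 <= k <= n ->
  hull_witness l mu e1 e2 (offs1 + k) = tplus (e1 k) (tplus l (e1 k)).
Proof. witness_auto. Qed.
Lemma hull_witness_s2 k : 1 <= k <= n ->
  hull_witness l mu e1 e2 (offs2 + k) = tplus (e2 k) (tplus mu (e2 k)).
Proof. witness_auto. Qed.

Lemma hull_cond_witness : tmax l mu = Some 0%R -> e1 0 = Some 0%R -> e2 0 = Some 0%R ->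
  tms_at m1 N1 Q1 (fun k => tplus l (e1 k)) -> tms_at m2 N2 Q2 (fun k => tplus mu (e2 k)) ->
  hull_cond (hull_witness l mu e1 e2).
Proof.
  intros H0 H1 H2 T1 T2. set (w := hull_witness l mu e1 e2).
  assert (W0 : w 0 = Some 0%R).
  { unfold w. rewrite hull_witness_z, H1, H2, !tplus_0_r by lia. exact H0. }
  assert (WL : w off1 = l).
  { unfold w. rewrite <- (Nat.add_0_r off1), hull_witness_u, H1 by lia. apply tplus_0_r. }
  assert (WM : w off2 = mu).
  { unfold w. rewrite <- (Nat.add_0_r off2), hull_witness_v, H2 by lia. apply tplus_0_r. }
  unfold hull_cond, coord_cond. rewrite W0, WL, WM, H0.
  split; [|split; [|split; [|split; [|split]]]].
  - eapply tms_at_ext; [|exact T1]. intros k Hk. symmetry; apply hull_witness_u; lia.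
  - eapply tms_at_ext; [|exact T2]. intros k Hk. symmetry; apply hull_witness_v; lia.
  - eapply tmax_eq0_le_l; eauto.
  - eapply tmax_eq0_le_r; eauto.
  - apply tle_refl.
  - intros k Hk. unfold w.
    rewrite hull_witness_u, hull_witness_v, hull_witness_z, hull_witness_s1, hull_witness_s2
      by lia.
    rewrite !tplus_square_eq. repeat split; auto using tmax_le_l, tmax_le_r, tle_refl.
Qed.

End Witness.

Lemma hull_cond_decompose e : e 0 = Some 0%R -> hull_cond e ->
  tmax (e off1) (e off2) = Some 0%R /\
  (forall k, 1 <= k <= n -> e k = tmax (e (off1 + k)) (e (off2 + k))) /\
  (e off1 = None -> forall k, 1 <= k <= n -> e (off1 + k) = None) /\
  (e off2 = None -> forall k, 1 <= k <= n -> e (off2 + k) = None).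
Proof.
  intros H0 (_ & _ & L1 & L2 & L0 & C). rewrite H0 in *.
  split; [|split; [|split]].
  - apply tle_antisym; [apply tmax_lub|]; auto.
  - intros k Hk. destruct (C k Hk) as (Cu & Cv & Cz & _).
    apply tle_antisym; [|apply tmax_lub]; auto.
  - intros HL k Hk. destruct (C k Hk) as (_ & _ & _ & Q & _). rewrite HL in Q.
    now apply tplus_diag_None, tle_None_r.
  - intros HM k Hk. destruct (C k Hk) as (_ & _ & _ & _ & Q). rewrite HM in Q.
    now apply tplus_diag_None, tle_None_r.
Qed.

Definition hull_projection : tpoint -> Prop :=
  tms_projection n (fst (blockdiag hull_blocks)) Nhull (snd (blockdiag hull_blocks)).

Section Projections.
Variables S1 S2 : tpoint -> Prop.
Hypotheses (HS1 : forall p, S1 p <-> tms_projection n m1 N1 Q1 p)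
           (HS2 : forall p, S2 p <-> tms_projection n m2 N2 Q2 p).

Lemma S1_sub_hull_projection p : S1 p -> hull_projection p.
Proof.
  intros [y1 [[L1 T1]%tms_tms_at <-]]%HS1.
  set (w := hull_witness (Some 0%R) None (xcoord y1) (fun _ => Some 0%R)).
  exists (map w (seq 1 Nhull)). split.
  - apply tms_map_seq.
    + unfold w. rewrite hull_witness_z by lia. trop_auto.
    + apply tms_at_hull_blocks, hull_cond_witness; [trop_auto|reflexivity|reflexivity| |].
      * now apply tms_at_scale.
      * eapply tms_at_ext; [|apply tms_at_None]. reflexivity.
  - rewrite firstn_map_seq, firstn_xcoord by idx_lia. apply map_ext_in.
    intros k Hk%in_seq. unfold w. rewrite hull_witness_z, tplus_0_l by lia. apply tmax_None_r.
Qed.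

Lemma S2_sub_hull_projection p : S2 p -> hull_projection p.
Proof.
  intros [y2 [[L2 T2]%tms_tms_at <-]]%HS2.
  set (w := hull_witness None (Some 0%R) (fun _ => Some 0%R) (xcoord y2)).
  exists (map w (seq 1 Nhull)). split.
  - apply tms_map_seq.
    + unfold w. rewrite hull_witness_z by lia. trop_auto.
    + apply tms_at_hull_blocks, hull_cond_witness; [trop_auto|reflexivity|reflexivity| |].
      * eapply tms_at_ext; [|apply tms_at_None]. reflexivity.
      * now apply tms_at_scale.
  - rewrite firstn_map_seq, firstn_xcoord by idx_lia. apply map_ext_in.
    intros k Hk%in_seq. unfold w. rewrite hull_witness_z by lia. apply tplus_0_l.
Qed.

Lemma hull_projection_sub_tconv p : hull_projection p -> tconv n (fun p => S1 p \/ S2 p) p.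
Proof.
  intros [y [[Ly Ey]%tms_tms_at <-]]. apply tms_at_hull_blocks in Ey.
  set (e := xcoord y) in *.
  destruct (hull_cond_decompose e eq_refl Ey) as (H0 & Hz & HL & HM).
  destruct Ey as (T1 & T2 & _).
  split; [rewrite length_firstn; idx_lia|].
  intros X HX HS. rewrite firstn_xcoord by idx_lia.
  assert (P1 : forall c, e off1 = Some c ->
            X (map (fun k => tplus (Some (- c)%R) (e (off1 + k))) (seq 1 n))).
  { intros c Hc. apply HS; left; apply HS1, tms_projection_of_tms_at; auto.
    now rewrite Nat.add_0_r. }
  assert (P2 : forall c, e off2 = Some c ->
            X (map (fun k => tplus (Some (- c)%R) (e (off2 + k))) (seq 1 n))).
  { intros c Hc. apply HS; right; apply HS2, tms_projection_of_tms_at; auto.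
    now rewrite Nat.add_0_r. }
  assert (Hcomb : forall l mu a b, X (map a (seq 1 n)) -> X (map b (seq 1 n)) ->
            tmax l mu = Some 0%R ->
            (forall k, 1 <= k <= n -> e k = tmax (tplus l (a k)) (tplus mu (b k))) ->
            X (map e (seq 1 n))).
  { intros l mu a b Ha Hb Hlm Hk.
    replace (map e (seq 1 n)) with (tcomb l mu (map a (seq 1 n)) (map b (seq 1 n)));
      [now apply HX|].
    rewrite tcomb_map_seq. apply map_ext_in. intros k Hk'%in_seq. symmetry; apply Hk; lia. }
  destruct (e off1) as [c|] eqn:E1, (e off2) as [c'|] eqn:E2.
  - apply (Hcomb _ _ _ _ (P1 c eq_refl) (P2 c' eq_refl) H0).
    intros k Hk. rewrite !tplus_opp_r. auto.
  - apply (Hcomb _ _ _ _ (P1 c eq_refl) (P1 c eq_refl) H0).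
    intros k Hk. rewrite (Hz k Hk), (HM eq_refl k Hk), tplus_opp_r. reflexivity.
  - apply (Hcomb _ _ _ _ (P2 c' eq_refl) (P2 c' eq_refl) H0).
    intros k Hk. rewrite (Hz k Hk), (HL eq_refl k Hk), tplus_opp_r. reflexivity.
  - discriminate H0.
Qed.

Lemma tconv_union_iff_hull_projection p :
  tconv n (fun p => S1 p \/ S2 p) p <-> hull_projection p.
Proof.
  split; [|apply hull_projection_sub_tconv].
  intros [_ Hall]. apply Hall; [apply tms_projection_tconvex|].
  intros z [Hz|Hz]; [apply S1_sub_hull_projection|apply S2_sub_hull_projection]; auto.
Qed.

End Projections.
End TconvHull.

Theorem mainTheorem17 (n : nat) (S1 S2 : tpoint -> Prop) :
  proj_tms n S1 -> proj_tms n S2 ->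
  proj_tms n (tconv n (fun p => S1 p \/ S2 p)).
Proof.
  intros [d1 [m1 [Q1 [Sy1 [Me1 H1]]]]] [d2 [m2 [Q2 [Sy2 [Me2 H2]]]]].
  set (B := blockdiag (hull_blocks n (n + d1) (n + d2) m1 m2 Q1 Q2)).
  set (N := Nhull n (n + d1) (n + d2)).
  destruct (sym_metzler_hull_blocks n (n + d1) (n + d2) m1 m2 Q1 Q2 Sy1 Me1 Sy2 Me2)
    as [HS HM].
  exists (N - n), (fst B), (snd B).
  replace (n + (N - n)) with N by (unfold N, Nhull, offs2, offs1; lia).
  split; [|split].
  - intros k i j _; apply HS.
  - intros k i j _; apply HM.
  - intros p. apply tconv_union_iff_hull_projection; auto; lia.
Qed.
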